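(* Let $X$ be a real Hilbert space, $f:X\to\mathbb{R}\cup\{+\infty\}$ a proper $\Phi_{lsc}$-convex function and $\bar x\in\mathrm{dom}(f)$. If $f$ is prox-regular at $\bar x$ for $\bar v\in\partial f(\bar x)$, then there exists $\bar a\ge0$ such that $(\bar a,\ \bar v+2\bar a\bar x)\in\partial_{lsc}f(\bar x)$; in particular $\partial_{lsc}f(\bar x)\ne\emptyset$.
   Context: $\Phi_{lsc}$ is the class of functions $\varphi(x)=-a\|x\|^2+\langle v,x\rangle+c$ ($a\ge0$, $v\in X^*$, $c\in\mathbb{R}$); $f$ is $\Phi_{lsc}$-convex if it is the pointwise supremum of the $\varphi\in\Phi_{lsc}$ with $\varphi\le f$; proper means at least one such $\varphi$ exists and $\mathrm{dom}(f)\ne\emptyset$. $\partial_{lsc}f(\bar x)$ is the set of $(a,v)\in\mathbb{R}_+\times X^*$ with $f(x)-f(\bar x)\ge\langle v,x-\bar x\rangle-a\|x\|^2+a\|\bar x\|^2$ for all $x\in X$. $\partial f(\bar x)$ denotes the limiting (Mordukhovich) subdifferential. $f$ is prox-regular at $\bar x$ for $\bar v\in\partial f(\bar x)$ if there exist $\rho>0$, $\varepsilon>0$ such that for all $x,x'$ with $\|x-\bar x\|<\varepsilon$, $\|x'-\bar x\|<\varepsilon$, $|f(x)-f(\bar x)|<\varepsilon$, and all $v\in\partial f(x)$ with $\|v-\bar v\|<\varepsilon$, one has $f(x')\ge f(x)+\langle v,x'-x\rangle-\tfrac12\rho\|x'-x\|^2$. *)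

From Stdlib Require Import Reals Lra.
Open Scope R_scope.

Record Hilbert := MkHilbert {
  hcar :> Type;
  hzero : hcar;
  hadd : hcar -> hcar -> hcar;
  hopp : hcar -> hcar;
  hscal : R -> hcar -> hcar;
  hinner : hcar -> hcar -> R;
  hadd_assoc : forall x y z, hadd x (hadd y z) = hadd (hadd x y) z;
  hadd_comm : forall x y, hadd x y = hadd y x;
  hadd_zero : forall x, hadd x hzero = x;
  hadd_opp : forall x, hadd x (hopp x) = hzero;
  hscal_one : forall x, hscal 1 x = x;
  hscal_assoc : forall a b x, hscal a (hscal b x) = hscal (a * b) x;
  hscal_distr_l : forall a x y, hscal a (hadd x y) = hadd (hscal a x) (hscal a y);
  hscal_distr_r : forall a b x, hscal (a + b) x = hadd (hscal a x) (hscal b x);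
  hinner_sym : forall x y, hinner x y = hinner y x;
  hinner_add_l : forall x y z, hinner (hadd x y) z = hinner x z + hinner y z;
  hinner_scal_l : forall a x y, hinner (hscal a x) y = a * hinner x y;
  hinner_pos : forall x, 0 <= hinner x x;
  hinner_def : forall x, hinner x x = 0 -> x = hzero;
  hcomplete : forall u : nat -> hcar,
    (forall eps, 0 < eps -> exists N, forall m n, (N <= m)%nat -> (N <= n)%nat ->
        sqrt (hinner (hadd (u m) (hopp (u n))) (hadd (u m) (hopp (u n)))) < eps) ->
    exists l, forall eps, 0 < eps -> exists N, forall n, (N <= n)%nat ->
        sqrt (hinner (hadd (u n) (hopp l)) (hadd (u n) (hopp l))) < eps
}.

Arguments hzero {h}.
Arguments hadd {h} _ _.
Arguments hopp {h} _.
Arguments hscal {h} _ _.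
Arguments hinner {h} _ _.

Definition hsub {X : Hilbert} (x y : X) : X := hadd x (hopp y).
Definition hnorm {X : Hilbert} (x : X) : R := sqrt (hinner x x).

Inductive ER := Fin (r : R) | PInf.

Definition ER_ge (e : ER) (r : R) : Prop :=
  match e with Fin y => r <= y | PInf => True end.

Definition dom {X : Hilbert} (f : X -> ER) (x : X) : Prop :=
  exists y, f x = Fin y.

(** The class Phi_lsc, elements parametrized by (a, v, c) with a >= 0.
    X^* is identified with X via the Riesz representation (inner product). *)
Definition phi_lsc {X : Hilbert} (a : R) (v : X) (c : R) (x : X) : R :=
  - a * (hnorm x) ^ 2 + hinner v x + c.

Definition is_minorant {X : Hilbert} (f : X -> ER) (a : R) (v : X) (c : R) : Prop :=
  0 <= a /\ forall x, ER_ge (f x) (phi_lsc a v c x).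

Definition ER_gt (e : ER) (r : R) : Prop :=
  match e with Fin y => r < y | PInf => True end.

(** f is the pointwise supremum (in R ∪ {+∞}) of the phi in Phi_lsc with
    phi <= f: every such phi lies below f by definition, so the supremum
    equals f(x) iff every real r < f(x) is exceeded by some minorant at x. *)
Definition Phi_lsc_convex {X : Hilbert} (f : X -> ER) : Prop :=
  forall x r, ER_gt (f x) r ->
    exists a v c, is_minorant f a v c /\ r < phi_lsc a v c x.

Definition proper_Phi_lsc {X : Hilbert} (f : X -> ER) : Prop :=
  (exists a v c, is_minorant f a v c) /\ (exists x, dom f x).

Definition in_subdiff_lsc {X : Hilbert} (f : X -> ER) (xb : X) (a : R) (v : X) : Prop :=
  0 <= a /\ exists fxb, f xb = Fin fxb /\
  forall x, ER_ge (f x)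
    (fxb + hinner v (hsub x xb) - a * (hnorm x) ^ 2 + a * (hnorm xb) ^ 2).

Definition in_frechet_subdiff {X : Hilbert} (f : X -> ER) (x : X) (v : X) : Prop :=
  exists fx, f x = Fin fx /\
  forall eps, 0 < eps -> exists delta, 0 < delta /\
    forall y, hnorm (hsub y x) < delta ->
      ER_ge (f y) (fx + hinner v (hsub y x) - eps * hnorm (hsub y x)).

Definition in_limiting_subdiff {X : Hilbert} (f : X -> ER) (x : X) (v : X) : Prop :=
  exists fx, f x = Fin fx /\
  exists (xs : nat -> X) (fxs : nat -> R) (vs : nat -> X),
    (forall k, f (xs k) = Fin (fxs k)) /\
    (forall k, in_frechet_subdiff f (xs k) (vs k)) /\
    Un_cv (fun k => hnorm (hsub (xs k) x)) 0 /\
    Un_cv fxs fx /\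
    (forall y, Un_cv (fun k => hinner (vs k) y) (hinner v y)).

Definition prox_regular {X : Hilbert} (f : X -> ER) (xb vb : X) : Prop :=
  exists fxb, f xb = Fin fxb /\
  exists rho eps, 0 < rho /\ 0 < eps /\
  forall x x' fx v,
    hnorm (hsub x xb) < eps -> hnorm (hsub x' xb) < eps ->
    f x = Fin fx -> Rabs (fx - fxb) < eps ->
    in_limiting_subdiff f x v -> hnorm (hsub v vb) < eps ->
    ER_ge (f x') (fx + hinner v (hsub x' x) - / 2 * rho * (hnorm (hsub x' x)) ^ 2).

(* Prox-regularity at xb, applied with x = xb and v = vb, bounds f from below on a ball around xb
   by the concave quadratic fxb + <vb, x - xb> - rho/2 |x - xb|^2.  Away from the ball, f lies
   above its global Phi_lsc-minorant, which grows at most like -a0 |x|^2; a quadratic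
   centred at xb with a large enough coefficient a goes below that minorant outside the ball.
   Finally, fxb + <vb + 2 a xb, x - xb> - a |x|^2 + a |xb|^2 = fxb + <vb, x - xb> - a |x - xb|^2,
   so such a quadratic minorant is exactly the Phi_lsc-subgradient (a, vb + 2 a xb). *)
From Stdlib Require Import Reals Lra Psatz.
Open Scope R_scope.

Section InnerProduct.
Variable X : Hilbert.

Lemma hinner_zero_l (y : X) : hinner hzero y = 0.
Proof.
  pose proof (hinner_add_l X hzero hzero y) as H.
  rewrite hadd_zero in H. lra.
Qed.

Lemma hinner_opp_l (x y : X) : hinner (hopp x) y = - hinner x y.
Proof.
  pose proof (hinner_add_l X x (hopp x) y) as H.
  rewrite hadd_opp, hinner_zero_l in H. lra.
Qed.

Lemma hinner_add_r (x y z : X) : hinner x (hadd y z) = hinner x y + hinner x z.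
Proof. rewrite hinner_sym, hinner_add_l, (hinner_sym _ y), (hinner_sym _ z). reflexivity. Qed.

Lemma hinner_scal_r (a : R) (x y : X) : hinner x (hscal a y) = a * hinner x y.
Proof. rewrite hinner_sym, hinner_scal_l, (hinner_sym _ y). reflexivity. Qed.

Lemma hinner_opp_r (x y : X) : hinner x (hopp y) = - hinner x y.
Proof. rewrite hinner_sym, hinner_opp_l, (hinner_sym _ y). reflexivity. Qed.

Lemma hnorm_sq (x : X) : hnorm x ^ 2 = hinner x x.
Proof. unfold hnorm. rewrite pow2_sqrt; [reflexivity | apply hinner_pos]. Qed.

Lemma hnorm_ge0 (x : X) : 0 <= hnorm x.
Proof. apply sqrt_pos. Qed.

Lemma hnorm_sub_diag (x : X) : hnorm (hsub x x) = 0.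
Proof. unfold hnorm, hsub. rewrite hadd_opp, hinner_zero_l. apply sqrt_0. Qed.

Lemma hinner_ge_neg_half_sq (w d : X) : - (hinner d d + hinner w w) / 2 <= hinner w d.
Proof.
  pose proof (hinner_pos X (hadd d w)) as P.
  rewrite hinner_add_l, !hinner_add_r, (hinner_sym _ d w) in P. lra.
Qed.

End InnerProduct.

Ltac hexpand :=
  unfold hsub, phi_lsc; rewrite ?hnorm_sq;
  repeat rewrite ?hinner_add_l, ?hinner_add_r, ?hinner_scal_l, ?hinner_scal_r,
    ?hinner_opp_l, ?hinner_opp_r.

Lemma ER_ge_le (e : ER) (r r' : R) : r' <= r -> ER_ge e r -> ER_ge e r'.
Proof. destruct e; simpl; lra. Qed.

Lemma phi_lsc_recenter (X : Hilbert) (a c : R) (v xb x : X) :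
  phi_lsc a v c x =
  - a * hnorm (hsub x xb) ^ 2 + hinner (hsub v (hscal (2 * a) xb)) (hsub x xb)
  + phi_lsc a v c xb.
Proof. hexpand. rewrite (hinner_sym _ x xb). ring. Qed.

Lemma lsc_bound_recenter (X : Hilbert) (a fxb : R) (vb xb x : X) :
  fxb + hinner (hadd vb (hscal (2 * a) xb)) (hsub x xb) - a * hnorm x ^ 2 + a * hnorm xb ^ 2
  = fxb + hinner vb (hsub x xb) - a * hnorm (hsub x xb) ^ 2.
Proof. hexpand. rewrite (hinner_sym _ x xb). ring. Qed.

Lemma in_subdiff_lsc_of_quadratic_minorant (X : Hilbert) (f : X -> ER) (xb vb : X) (fxb a : R) :
  0 <= a -> f xb = Fin fxb ->
  (forall x, ER_ge (f x) (fxb + hinner vb (hsub x xb) - a * hnorm (hsub x xb) ^ 2)) ->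
  in_subdiff_lsc f xb a (hadd vb (hscal (2 * a) xb)).
Proof.
  intros Ha Hfxb Hq. split; [exact Ha |].
  exists fxb. split; [exact Hfxb |].
  intro x. rewrite lsc_bound_recenter. apply Hq.
Qed.

Lemma prox_regular_local_quadratic_minorant (X : Hilbert) (f : X -> ER) (xb vb : X) :
  in_limiting_subdiff f xb vb -> prox_regular f xb vb ->
  exists fxb rho eps, f xb = Fin fxb /\ 0 < rho /\ 0 < eps /\
  forall x, hnorm (hsub x xb) < eps ->
    ER_ge (f x) (fxb + hinner vb (hsub x xb) - rho / 2 * hnorm (hsub x xb) ^ 2).
Proof.
  intros Hlim [fxb [Hfxb [rho [eps [Hrho [Heps Hpr]]]]]].
  exists fxb, rho, eps. do 3 (split; [assumption |]).
  intros x Hx.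
  replace (rho / 2) with (/ 2 * rho) by field.
  apply (Hpr xb x fxb vb); rewrite ?hnorm_sub_diag; auto.
  rewrite Rminus_diag, Rabs_R0. exact Heps.
Qed.

Lemma phi_lsc_dominates_far (X : Hilbert) (a0 c0 fxb eps : R) (v0 vb xb : X) :
  0 < eps ->
  exists A, forall a x, A <= a -> eps <= hnorm (hsub x xb) ->
    fxb + hinner vb (hsub x xb) - a * hnorm (hsub x xb) ^ 2 <= phi_lsc a0 v0 c0 x.
Proof.
  intros Heps.
  set (w := hsub (hsub v0 (hscal (2 * a0) xb)) vb).
  set (M := hinner w w / 2 + fxb - phi_lsc a0 v0 c0 xb).
  exists (a0 + 1 / 2 + Rabs M / (eps * eps)). intros a x Ha Hfar.
  set (d := hsub x xb) in *.
  rewrite (phi_lsc_recenter X a0 c0 v0 xb x). fold d.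
  assert (Hw : hinner (hsub v0 (hscal (2 * a0) xb)) d = hinner w d + hinner vb d).
  { unfold w, hsub. rewrite !hinner_add_l, !hinner_opp_l. ring. }
  assert (Hd : eps * eps <= hnorm d ^ 2).
  { pose proof (hnorm_ge0 X d). nra. }
  assert (HM : Rabs M <= (a - a0 - 1 / 2) * hnorm d ^ 2).
  { apply (Rle_trans _ (Rabs M / (eps * eps) * hnorm d ^ 2)).
    - assert (Hscale : Rabs M = Rabs M / (eps * eps) * (eps * eps)) by (field; nra).
      rewrite Hscale at 1.
      apply Rmult_le_compat_l; [| exact Hd].
      apply Rmult_le_pos; [apply Rabs_pos | left; apply Rinv_0_lt_compat; nra].
    - apply Rmult_le_compat_r; [apply pow2_ge_0 | lra]. }
  pose proof (hinner_ge_neg_half_sq X w d).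
  pose proof (Rle_abs M). rewrite hnorm_sq in *. unfold M in *. lra.
Qed.

Theorem mainTheorem9 (X : Hilbert) (f : X -> ER) (xb vb : X) :
  proper_Phi_lsc f -> Phi_lsc_convex f -> dom f xb ->
  in_limiting_subdiff f xb vb -> prox_regular f xb vb ->
  (exists ab, 0 <= ab /\ in_subdiff_lsc f xb ab (hadd vb (hscal (2 * ab) xb))) /\
  (exists a v, in_subdiff_lsc f xb a v).
Proof.
  intros [[a0 [v0 [c0 [_ Hmin]]]] _] _ _ Hlim Hpr.
  destruct (prox_regular_local_quadratic_minorant X f xb vb Hlim Hpr)
    as [fxb [rho [eps [Hfxb [Hrho [Heps Hloc]]]]]].
  destruct (phi_lsc_dominates_far X a0 c0 fxb eps v0 vb xb Heps) as [A Hfar].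
  set (a := Rmax (rho / 2) A).
  assert (Ha_rho : rho / 2 <= a) by apply Rmax_l.
  assert (Ha : 0 <= a) by lra.
  assert (Hsub : in_subdiff_lsc f xb a (hadd vb (hscal (2 * a) xb))).
  { apply (in_subdiff_lsc_of_quadratic_minorant X f xb vb fxb a Ha Hfxb).
    intro x. destruct (Rlt_or_le (hnorm (hsub x xb)) eps) as [Hnear | Hfar_x].
    - refine (ER_ge_le _ _ _ _ (Hloc x Hnear)).
      pose proof (pow2_ge_0 (hnorm (hsub x xb))). nra.
    - refine (ER_ge_le _ _ _ (Hfar a x (Rmax_r _ _) Hfar_x) (Hmin x)). }
  split; [exists a; split; assumption | exists a, (hadd vb (hscal (2 * a) xb)); exact Hsub].
Qed.
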